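(* Let $H=(S_0,e_0,S_1,\dots)$ be a history sequence of the Simpler Lazy Set algorithm, let $S_i$ be a state of $H$, and let $a,b$ be active addresses of $S_i$ with $a\neq\mathsf T$ such that the path from $a$ to $\mathsf T$ in $S_i$ does not contain $b$. Then the path from $a$ to $\mathsf T$ in $S_{i+1}$ does not contain $b$. Consequently, for every $j>i$, $b$ is not on the path from $a$ to $\mathsf T$ in $S_j$.
   Context: Simpler Lazy Set algorithm. Fix a countably infinite set $A$ of addresses with distinguished $\mathsf H,\mathsf T$; $\mathrm{Number}=\mathbb N\cup\{-1,\infty\}$. A state $S$: set $\mathrm{Active}^S\subseteq A$, $\mathrm{Next}^S:\mathrm{Active}^S\setminus\{\mathsf T\}\to A$, $\mathrm{Val}^S:\mathrm{Active}^S\to\mathrm{Number}$, and for each process $p$: $PC_p\in\{0,1,2,3.1,\dots,3.5\}$, $x_p\in\mathbb N$, $\mathrm{curr}_p\in A$, $\mathrm{status}_p$. $S$ is normal if $\mathrm{Active}^S$ is finite, $\mathsf H,\mathsf T$ are active with values $-1,\infty$, other active addresses have values in $\mathbb N$, and for active $a\neq\mathsf T$, $\mathrm{Next}(a)$ is active with $\mathrm{Val}(a)<\mathrm{Val}(\mathrm{Next}(a))$. A path is a sequence $a_1,\dots,a_m$ ($m>1$) of active addresses with $\mathrm{Next}(a_i)=a_{i+1}$; in a normal state each active address $a\ne\mathsf T$ lies on a unique path from $a$ to $\mathsf T$; the main branch is the path from $\mathsf H$ to $\mathsf T$. Initial state: $\mathrm{Active}=\{\mathsf H,\mathsf T\}$,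 $\mathrm{Next}(\mathsf H)=\mathsf T$, all $PC_p=0$. Steps $(S,e,T)$ of a process $p$ on a normal $S$: (i) invocation: $PC_p$ from $0$ to $1$, $2$ or $3.1$, with $x_p\in\mathbb N$ arbitrary; (ii) failure: $PC_p$ from $1$ or $2$ to $0$ with $\chi(e)=f$, nothing else changes; (iii) $\mathrm{AD}(x)$ ($x=x_p$, $PC_p$ from $1$ to $0$): with $\mathfrak p$ the main-branch address having $\mathrm{Val}(\mathfrak p)<x\le\mathrm{Val}(\mathrm{Next}(\mathfrak p))$: if $\mathrm{Val}(\mathrm{Next}(\mathfrak p))=x$, no other change, $\chi(e)=1$; else a new address $a\notin\mathrm{Active}^S$ is made active with $\mathrm{Val}(a)=x$, $\mathrm{Next}^T(\mathfrak p)=a$, $\mathrm{Next}^T(a)=\mathrm{Next}^S(\mathfrak p)$, $\chi(e)=0$; (iv) $\mathrm{RM}(x)$ ($PC_p$ from $2$ to $0$): if the main branch has an address $cu$ of value $x$, with $pred$ its main-branch predecessor, set $\mathrm{Next}^T(pred)=\mathrm{Next}^S(cu)$, $\chi(e)=1$; else no change, $\chi(e)=0$; (v) CONTAINS$(x)$ lines, each an atomic step changing only $\mathrm{curr}_p,PC_p,\mathrm{status}_p$: 3.1 $\mathrm{curr}_p:=\mathsf H$; 3.2/3.3 $\mathrm{curr}_p:=\mathrm{Next}(\mathrm{curr}_p)$; 3.4 if $\mathrm{Val}(\mathrm{curr}_p)\ge x$ go to 3.5 else to 3.3; 3.5 return $1$ if $\mathrm{Val}(\mathrm{curr}_p)=x$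 else $0$, $PC_p:=0$. A history sequence is $(S_0,e_0,S_1,\dots)$ with $S_0$ the initial state and each $(S_i,e_i,S_{i+1})$ a step of some process. *)

From mathcomp Require Import all_boot.
Set Implicit Arguments. Unset Strict Implicit. Unset Printing Implicit Defensive.

Inductive Number := NNeg1 | NNat of nat | NInf.

Definition num_lt (u v : Number) : bool :=
  match u, v with
  | NNeg1, NNeg1 => false
  | NNeg1, _ => true
  | NNat m, NNat n => m < n
  | NNat _, NInf => true
  | _, _ => false
  end.
Definition num_le (u v : Number) : bool := ~~ num_lt v u.
Definition num_eq (u v : Number) : bool := num_le u v && num_le v u.

(* program counter values 0, 1, 2, 3.1, ..., 3.5 *)
Inductive PCv := L0 | L1 | L2 | L31 | L32 | L33 | L34 | L35.

Inductive Chi := ChiF | Chi0 | Chi1.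

Record Event (P : Type) := mkEvent { ev_proc : P; ev_chi : option Chi }.

(* A state. Next and Val are total functions, but only their values on
   the intended domains (Active \ {T}, resp. Active) are ever constrained. *)
Record State (A P : Type) := mkState {
  active : A -> bool;
  next   : A -> A;
  val    : A -> Number;
  pc     : P -> PCv;
  xv     : P -> nat;
  curr   : P -> A;
  status : P -> nat }.

Section Model.
Variables (A : countType) (H T : A) (P : Type).
Local Notation State := (State A P).

Definition normal (S : State) : Prop :=
  (exists s : seq A, forall a, active S a -> a \in s) /\
  active S H /\ active S T /\ val S H = NNeg1 /\ val S T = NInf /\
  (forall a, active S a -> a <> H -> a <> T -> exists n, val S a = NNat n) /\
  (forall a, active S a -> a <> T ->
     active S (next S a) /\ num_lt (val S a) (val S (next S a))).

Definition path_from_to (S : State) (a b : A) (l : seq A) : Prop :=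
  exists l', l = a :: l' /\ l' <> [::] /\ all (active S) l /\
    last a l' = b /\ path (fun u v => (u != T) && (next S u == v)) a l'.

Definition on_main (S : State) (c : A) : Prop :=
  exists l, path_from_to S H T l /\ c \in l.

Definition same_heap (S S' : State) : Prop :=
  (forall c, active S' c = active S c) /\
  (forall c, active S c -> c <> T -> next S' c = next S c) /\
  (forall c, active S c -> val S' c = val S c).

Definition others_same (p : P) (S S' : State) : Prop :=
  forall q, q <> p ->
    pc S' q = pc S q /\ xv S' q = xv S q /\ curr S' q = curr S q /\
    status S' q = status S q.

Definition invocation_step (p : P) (S : State) (e : Event P) (S' : State) :=
  pc S p = L0 /\ (pc S' p = L1 \/ pc S' p = L2 \/ pc S' p = L31) /\
  same_heap S S' /\ curr S' p = curr S p /\ status S' p = status S p.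

Definition failure_step (p : P) (S : State) (e : Event P) (S' : State) :=
  (pc S p = L1 \/ pc S p = L2) /\ pc S' p = L0 /\ ev_chi e = Some ChiF /\
  same_heap S S' /\ xv S' p = xv S p /\ curr S' p = curr S p /\
  status S' p = status S p.

Definition add_step (p : P) (S : State) (e : Event P) (S' : State) :=
  let x := xv S p in
  pc S p = L1 /\ pc S' p = L0 /\
  xv S' p = xv S p /\ curr S' p = curr S p /\ status S' p = status S p /\
  exists pp, on_main S pp /\ pp <> T /\
    num_lt (val S pp) (NNat x) /\ num_le (NNat x) (val S (next S pp)) /\
    ((val S (next S pp) = NNat x /\ same_heap S S' /\ ev_chi e = Some Chi1) \/
     (val S (next S pp) <> NNat x /\
      exists a, ~~ active S a /\
        (forall c, active S' c = active S c || (c == a)) /\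
        val S' a = NNat x /\
        (forall c, active S c -> val S' c = val S c) /\
        next S' pp = a /\ next S' a = next S pp /\
        (forall c, active S c -> c <> T -> c <> pp -> next S' c = next S c) /\
        ev_chi e = Some Chi0)).

Definition remove_step (p : P) (S : State) (e : Event P) (S' : State) :=
  let x := xv S p in
  pc S p = L2 /\ pc S' p = L0 /\
  xv S' p = xv S p /\ curr S' p = curr S p /\ status S' p = status S p /\
  ((exists cu pred, on_main S cu /\ val S cu = NNat x /\
      on_main S pred /\ pred <> T /\ next S pred = cu /\
      (forall c, active S' c = active S c) /\
      (forall c, active S c -> val S' c = val S c) /\
      next S' pred = next S cu /\
      (forall c, active S c -> c <> T -> c <> pred -> next S' c = next S c) /\
      ev_chi e = Some Chi1) \/
   ((forall cu, on_main S cu -> val S cu <> NNat x) /\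
      same_heap S S' /\ ev_chi e = Some Chi0)).

Definition contains_step (p : P) (S : State) (e : Event P) (S' : State) :=
  let x := xv S p in
  let c := curr S p in
  same_heap S S' /\ xv S' p = xv S p /\
  ((pc S p = L31 /\ pc S' p = L32 /\ curr S' p = H) \/
   (pc S p = L32 /\ active S c /\ c <> T /\ pc S' p = L34 /\
      curr S' p = next S c) \/
   (pc S p = L33 /\ active S c /\ c <> T /\ pc S' p = L34 /\
      curr S' p = next S c) \/
   (pc S p = L34 /\ active S c /\ curr S' p = c /\
      pc S' p = (if num_le (NNat x) (val S c) then L35 else L33)) \/
   (pc S p = L35 /\ active S c /\ curr S' p = c /\ pc S' p = L0 /\
      ev_chi e = Some (if num_eq (val S c) (NNat x) then Chi1 else Chi0))).

Definition step (S : State) (e : Event P) (S' : State) : Prop :=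
  normal S /\
  let p := ev_proc e in
  others_same p S S' /\
  (invocation_step p S e S' \/ failure_step p S e S' \/ add_step p S e S' \/
   remove_step p S e S' \/ contains_step p S e S').

Definition initial (S : State) : Prop :=
  (forall c, active S c = (c == H) || (c == T)) /\
  next S H = T /\ val S H = NNeg1 /\ val S T = NInf /\
  (forall p, pc S p = L0).

(* index k is a state of the history of length len (None = infinite) *)
Definition in_hist (len : option nat) (k : nat) : Prop :=
  match len with None => True | Some n => k <= n end.

Definition history (len : option nat) (S : nat -> State) (e : nat -> Event P)
  : Prop :=
  initial (S 0) /\ forall k, in_hist len k.+1 -> step (S k) (e k) (S k.+1).

End Model.

From Pilot Require Import Defs.
From mathcomp Require Import all_boot.
Set Implicit Arguments. Unset Strict Implicit. Unset Printing Implicit Defensive.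

(* Along Next the values of a normal state strictly increase, so every active
   address reaches T, by a unique path since Next is a function.  A step
   changes Next on active addresses in at most one of two ways: it splices a
   fresh (previously inactive) address in after one node, or it makes one node
   bypass its successor.  Hence the old path from a to T, which avoids b,
   reroutes into a path of the next state made of old path nodes and fresh
   addresses, none of which is b; by uniqueness it is the only one. *)

Lemma num_lt_irr (u : Number) : ~~ num_lt u u.
Proof. by case: u => //= n; rewrite ltnn. Qed.

Lemma num_lt_trans (v u w : Number) : num_lt u v -> num_lt v w -> num_lt u w.
Proof. by case: u; case: v; case: w => //= m n k; apply: ltn_trans. Qed.

Lemma count_ltn_sub (T : eqType) (p q : pred T) (s : seq T) (x : T) :
  subpred p q -> x \in s -> q x -> ~~ p x -> count p s < count q s.
Proof.
move=> pq + qx npx; elim: s => //= y s IH; rewrite inE => /orP [/eqP<- | /IH].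
  by rewrite qx (negbTE npx) ltnS; apply: sub_count.
by rewrite -addnS; apply: leq_add; case: (boolP (p y)) => // /pq ->.
Qed.

Section SuccessorPaths.
Variables (A : eqType) (T : A).

Definition succ_rel (f : A -> A) : rel A := fun u v => (u != T) && (f u == v).

Lemma succ_path_to_uniq (f : A -> A) (c : A) (l1 l2 : seq A) :
  path (succ_rel f) c l1 -> last c l1 = T ->
  path (succ_rel f) c l2 -> last c l2 = T -> l1 = l2.
Proof.
elim: l1 c l2 => [|x l1 IH] c [|y l2] //=.
- by move=> _ -> /andP [/andP [/eqP]].
- by move=> /andP [/andP [/eqP cT _] _] _ _ /cT.
move=> /andP [/andP [_ /eqP <-] p1] l1T /andP [/andP [_ /eqP <-] p2] l2T.
by rewrite (IH _ _ p1 l1T p2 l2T).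
Qed.

Lemma succ_path_to_exists (f : A -> A) (act : pred A) (rank : A -> nat) :
  (forall u, act u -> u != T -> act (f u) /\ rank (f u) < rank u) ->
  forall c, act c ->
  exists l, [/\ path (succ_rel f) c l, last c l = T & all act (c :: l)].
Proof.
move=> desc c; have [n] := ubnP (rank c); elim: n c => // n IH c hn hc.
have [cT|cT] := eqVneq c T; first by exists [::]; rewrite /= hc cT.
have [hfc hlt] := desc c hc cT.
have [l [pl lT al]] := IH (f c) (leq_trans hlt hn) hfc.
by exists (f c :: l); rewrite /= /succ_rel cT eqxx hc pl lT.
Qed.

Definition detour (f f' : A -> A) (Q : pred A) (u : A) : Prop :=
  [\/ f' u = f u,
      exists2 w, Q w && (w != T) & f' u = w /\ f' w = f u
    | f u != T /\ f' u = f (f u)].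

Lemma detour_sub (f f' : A -> A) (Q1 Q2 : pred A) (u : A) :
  subpred Q1 Q2 -> detour f f' Q1 u -> detour f f' Q2 u.
Proof.
move=> sQ [|[w /andP [/sQ Qw wT] fw]|]; [exact: Or31 | | exact: Or33].
by apply: Or32; exists w; rewrite ?Qw.
Qed.

Lemma succ_path_reroute (f f' : A -> A) (Q : pred A) (c : A) (l : seq A) :
  path (succ_rel f) c l -> last c l = T -> all Q (c :: l) ->
  {in c :: l, forall u, u != T -> detour f f' Q u} ->
  exists l', [/\ path (succ_rel f') c l', last c l' = T & all Q (c :: l')].
Proof.
have [n] := ubnP (size l); elim: n c l => // n IH c [|v l] hn.
  by move=> _ /= cT /andP [Qc _] _; exists [::]; split; rewrite //= Qc.
move=> /= /andP [/andP [cT /eqP fc] pl] lT /andP [Qc Ql] hdet.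
have sub_det (s : seq A) :
    {subset s <= v :: l} -> {in s, forall u, u != T -> detour f f' Q u}.
  by move=> sl u /sl hu; apply: hdet; rewrite inE hu orbT.
have [f'c|[w /andP [Qw wT] [f'c f'w]]|[fcT f'c]] := hdet c (mem_head _ _) cT.
- have [l' [pl' lT' Ql']] := IH v l hn pl lT Ql (sub_det _ (fun _ => id)).
  by exists (v :: l'); rewrite /= /succ_rel cT f'c fc eqxx pl' lT' Qc.
- have [l' [pl' lT' Ql']] := IH v l hn pl lT Ql (sub_det _ (fun _ => id)).
  by exists (w :: v :: l'); rewrite /= /succ_rel cT wT f'c f'w fc !eqxx pl' lT' Qc Qw.
case: l hn pl lT Ql sub_det {hdet} => [|v2 l] hn.
  by move=> _ /= vT; rewrite fc vT eqxx in fcT.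
move=> /= /andP [/andP [vT /eqP fv] pl] lT /andP [_ Ql] sub_det.
have sub2 : {subset v2 :: l <= v :: v2 :: l} by move=> u hu; rewrite inE hu orbT.
have [l' [pl' lT' Ql']] := IH v2 l (ltnW hn) pl lT Ql (sub_det _ sub2).
by exists (v2 :: l'); rewrite /= /succ_rel cT f'c fc fv eqxx pl' lT' Qc.
Qed.

End SuccessorPaths.

Section LazySet.
Variables (A : countType) (H T : A) (P : Type).
Implicit Types (S : State A P) (a b c u : A).

Lemma normal_path_to_T S c : normal H T S -> active S c ->
  exists l, [/\ path (succ_rel T (Defs.next S)) c l, last c l = T
             & all (active S) (c :: l)].
Proof.
case=> [[s act_s] [_ [_ [_ [_ [_ incr]]]]]].
pose rank u := count (fun d => num_lt (Defs.val S u) (Defs.val S d)) s.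
apply: (succ_path_to_exists (rank := rank)) => u hu /eqP uT.
have [hnu lt_u] := incr u hu uT; split=> //.
apply: (count_ltn_sub _ (act_s _ hnu) lt_u (num_lt_irr _)).
by move=> d; apply: num_lt_trans.
Qed.

Lemma path_from_to_succ S a l :
  path_from_to T S a T l <->
  exists2 l', l = a :: l' &
    [/\ a != T, path (succ_rel T (Defs.next S)) a l', last a l' = T & all (active S) l].
Proof.
split=> [[l' [-> [l'0 [al [lT pl]]]]] | [l' -> [aT pl lT al]]].
  by exists l' => //; split=> //; case: l' l'0 pl {lT al} => //= v l' _ /andP [/andP []].
exists l'; do 4?split=> //.
by move=> l'0; rewrite l'0 /= in lT; rewrite lT eqxx in aT.
Qed.

Definition fresh S S' : pred A := fun w => active S' w && ~~ active S w.

Definition heap_evolves S S' : Prop :=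
  (forall c, active S c -> active S' c) /\
  (forall u, active S u -> u != T ->
     detour T (Defs.next S) (Defs.next S') (fresh S S') u).

Lemma same_heap_evolves S S' : same_heap T S S' -> heap_evolves S S'.
Proof.
case=> act_eq [next_eq _]; split=> [c|u hu /eqP uT]; first by rewrite act_eq.
exact/Or31/next_eq.
Qed.

Lemma step_heap_evolves S e S' : step H T S e S' -> heap_evolves S S'.
Proof.
case=> nS [_ [[_ [_ [sh _]]] | [[_ [_ [_ [sh _]]]] | [add | [rem | [sh _]]]]]];
  try exact: same_heap_evolves sh.
- case: add => [_ [_ [_ [_ [_ [pp [_ [_ [_ [_ [[_ [sh _]] | ins]]]]]]]]]]];
    first exact: same_heap_evolves sh.
  case: ins => [_ [w [nw [act' [_ [_ [npp [nw' [next_eq _]]]]]]]]].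
  split=> [c hc|u hu /eqP uT]; first by rewrite act' hc.
  have [->|upp] := eqVneq u pp; last by apply/Or31/next_eq => //; apply/eqP.
  apply: Or32; exists w => //; rewrite /fresh act' eqxx orbT nw /=.
  by apply: contraNneq nw => ->; case: nS => [_ [_ []]].
case: rem => [_ [_ [_ [_ [_ [del | [_ [sh _]]]]]]]]; last exact: same_heap_evolves sh.
case: del => [cu [pr [_ [vcu [_ [_ [npr [act' [_ [npr' [next_eq _]]]]]]]]]]].
split=> [c|u hu /eqP uT]; first by rewrite act'.
have [->|upr] := eqVneq u pr; last by apply/Or31/next_eq => //; apply/eqP.
apply: Or33; rewrite npr npr'; split=> //; apply/eqP=> cuT.
by case: nS => [_ [_ [_ [_ [vT _]]]]]; rewrite -cuT vcu in vT.
Qed.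

Definition reaches_avoiding S a b : Prop :=
  (exists l, path_from_to T S a T l) /\
  (forall l, path_from_to T S a T l -> b \notin l).

Lemma step_reaches_avoiding S e S' a b : step H T S e S' ->
  active S a -> active S b -> a <> T ->
  (forall l, path_from_to T S a T l -> b \notin l) ->
  reaches_avoiding S' a b.
Proof.
move=> st ha hb /eqP aT avoid; have [mono evolve] := step_heap_evolves st.
have [l [pl lT al]] := normal_path_to_T st.1 ha.
have bl : b \notin a :: l by apply: avoid; apply/path_from_to_succ; exists l.
pose Q : pred A := fun u => active S' u && (u != b).
have fresh_Q : subpred (fresh S S') Q.
  by move=> w /andP [aw nw]; rewrite /Q aw; apply: contraNneq nw => ->.
have [l' [pl' lT' Ql']] : exists l',
    [/\ path (succ_rel T (Defs.next S')) a l', last a l' = T & all Q (a :: l')].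
  apply: succ_path_reroute pl lT _ _.
    apply/allP=> u hu; rewrite /Q mono ?(allP al) //.
    by apply: contraNneq bl => <-.
  move=> u hu uT; apply: detour_sub fresh_Q _; exact: evolve (allP al u hu) uT.
have al' : all (active S') (a :: l') by apply: sub_all Ql' => u /andP [].
split=> [|l2 /path_from_to_succ [l2' -> [_ pl2 lT2 _]]].
  by exists (a :: l'); apply/path_from_to_succ; exists l'.
rewrite (succ_path_to_uniq pl2 lT2 pl' lT'); apply/negP => /(allP Ql').
by rewrite /Q eqxx andbF.
Qed.

Lemma step_active S e S' c : step H T S e S' -> active S c -> active S' c.
Proof. by move=> /step_heap_evolves [mono _] /mono. Qed.

End LazySet.

Theorem lemma4p12 (A : countType) (H T : A) (HneT : H <> T)
  (Ainf : forall s : seq A, exists a, a \notin s)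
  (P : Type) (len : option nat)
  (St : nat -> State A P) (e : nat -> Event P)
  (hist : history H T len St e)
  (i : nat) (hi : in_hist len i.+1) (a b : A)
  (ha : active (St i) a) (hb : active (St i) b) (haT : a <> T)
  (hnb : forall l, path_from_to T (St i) a T l -> b \notin l) :
  ((exists l, path_from_to T (St i.+1) a T l) /\
   (forall l, path_from_to T (St i.+1) a T l -> b \notin l)) /\
  (forall j, i < j -> in_hist len j ->
     (exists l, path_from_to T (St j) a T l) /\
     (forall l, path_from_to T (St j) a T l -> b \notin l)).
Proof.
have inv j : i < j -> in_hist len j ->
    [/\ active (St j) a, active (St j) b & reaches_avoiding T (St j) a b].
  elim: j => // j IH; rewrite ltnS => le_ij hj.
  have st := hist.2 j hj.
  have [ha' hb' avoid] : [/\ active (St j) a, active (St j) b &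
      forall l, path_from_to T (St j) a T l -> b \notin l].
    move: le_ij; rewrite leq_eqVlt => /orP [/eqP <- // | lt_ij].
    have hj' : in_hist len j by case: (len) hj => //= n /ltnW.
    by case: (IH lt_ij hj') => ha' hb' [_ avoid].
  split; [exact: step_active st ha' | exact: step_active st hb' |].
  exact: step_reaches_avoiding st ha' hb' haT avoid.
split=> [|j lt_ij /(inv j lt_ij) [] //].
by case: (inv i.+1 (ltnSn i) hi).
Qed.
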